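(* Let $i\in K$, let $w$ be a strong minuscule element with $\Lambda_w=\Lambda_i$, and let $w=s_{i_1}\cdots s_{i_r}$ be a reduced expression of $w$ (so that $i_r=i$). For each $1\le p\le r-1$ put $u_p:=\#\{p+1\le a\le r\mid i_a\in\operatorname{adj}_s(i_p)\}$. Then $u_p$ is a nonnegative even integer if $i_p=i$, and $u_p$ is a positive odd integer if $i_p\ne i$.
   Context: Let $\mathfrak g$ be a finite-dimensional simple Lie algebra over $\mathbb C$ of type $\mathrm A_n$, $\mathrm B_n$, $\mathrm C_n$ or $\mathrm D_n$, with index set $I=\{1,\dots,n\}$, simple roots $\alpha_i$, simple coroots $\alpha_i^\vee$, Cartan matrix $a_{ij}=\langle\alpha_j,\alpha_i^\vee\rangle$, fundamental weights $\Lambda_i$, integral weights $P=\bigoplus_i\mathbb Z\Lambda_i$, dominant integral weights $P^+=\sum_i\mathbb Z_{\ge0}\Lambda_i$, Weyl group $W$ generated by simple reflections $s_i$. The Dynkin diagrams are labeled as follows: type $\mathrm A_n$: chain $1-2-\cdots-n$; type $\mathrm B_n$: chain $1-2-\cdots-n$ with a double bond between $1$ and $2$, $\alpha_1$ short and $\alpha_2,\dots,\alpha_n$ long; type $\mathrm C_n$: chain $1-2-\cdots-n$ with a double bond between $1$ and $2$, $\alpha_1$ long and $\alpha_2,\dots,\alpha_n$ short; type $\mathrm D_n$: chain $n-(n-1)-\cdots-3$ with node $3$ joined to both nodes $1$ and $2$. Set $K=I$ in types $\mathrm A_n,\mathrm D_n$, $K=\{1\}$ in type $\mathrm B_n$,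 $K=I\setminus\{1\}$ in type $\mathrm C_n$. For $j\in I$, $\operatorname{adj}_s(j):=\{m\in I\mid a_{jm}=-1\}$. For $\Lambda\in P$, $w\in W$ is $\Lambda$-minuscule if there is a reduced expression $w=s_{i_1}\cdots s_{i_r}$ with $\langle s_{i_{p+1}}\cdots s_{i_r}(\Lambda),\alpha_{i_p}^\vee\rangle=1$ for all $1\le p\le r$ (this then holds for every reduced expression); $w$ is dominant minuscule if it is $\Lambda$-minuscule for some $\Lambda\in P^+$. A dominant minuscule $w$ is strong minuscule if there is a unique $\Lambda\in P^+$, denoted $\Lambda_w$, such that $w$ is $\Lambda$-minuscule. It is known that for a strong minuscule $w$ with $\Lambda_w=\Lambda_i$, every reduced expression of $w$ ends with $s_i$. *)

From mathcomp Require Import all_boot all_order all_algebra.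
Set Implicit Arguments. Unset Strict Implicit. Unset Printing Implicit Defensive.
Import GRing.Theory Num.Theory.
Local Open Scope ring_scope.

(* Cartan types; node k : 'I_n (0-based) is the paper's label k+1. *)
Inductive ctype := TA | TB | TC | TD.

Definition valid_rank (X : ctype) (n : nat) : bool :=
  match X with
  | TA => (1 <= n)%N
  | TB | TC => (2 <= n)%N
  | TD => (4 <= n)%N
  end.

(* Cartan matrix a_{ij} = <alpha_j, alpha_i^vee>, in the paper's labelling. *)
Definition cartan (X : ctype) (n : nat) (i j : 'I_n) : int :=
  let a := nat_of_ord i in let b := nat_of_ord j in
  if a == b then 2%:Z else
  match X with
  | TA => if (a == b.+1) || (b == a.+1) then (-1)%R else 0
  | TB => (* alpha_1 short, alpha_2..alpha_n long *)
      if (a == 0%N) && (b == 1%N) then (-2)%R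
      else if (a == b.+1) || (b == a.+1) then (-1)%R else 0
  | TC => (* alpha_1 long, alpha_2..alpha_n short *)
      if (a == 1%N) && (b == 0%N) then (-2)%R
      else if (a == b.+1) || (b == a.+1) then (-1)%R else 0
  | TD =>
      if [|| (a == 0%N) && (b == 2%N), (a == 2%N) && (b == 0%N),
             (a == 1%N) && (b == 2%N), (a == 2%N) && (b == 1%N),
             (2 <= a)%N && (b == a.+1) | (2 <= b)%N && (a == b.+1)]
      then (-1)%R else 0
  end.

Definition inK (X : ctype) (n : nat) (i : 'I_n) : bool :=
  match X with
  | TA | TD => true
  | TB => nat_of_ord i == 0%N
  | TC => nat_of_ord i != 0%N
  end.

Definition adjs (X : ctype) (n : nat) (j m : 'I_n) : bool :=
  cartan X j m == (-1)%R.

(* Integral weights, in the basis of fundamental weights: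
   lam k = <lam, alpha_k^vee>. *)
Definition weight (n : nat) := 'I_n -> int.

Definition fund (n : nat) (i : 'I_n) : weight n :=
  fun k => if k == i then 1 else 0.

Definition dominant (n : nat) (lam : weight n) : Prop := forall k, 0 <= lam k.

(* simple reflection: s_j(lam) = lam - <lam,alpha_j^vee> alpha_j,
   and <alpha_j, alpha_k^vee> = a_{kj} *)
Definition sref (X : ctype) (n : nat) (j : 'I_n) (lam : weight n) : weight n :=
  fun k => lam k - lam j * cartan X k j.

(* word [:: i_1; ...; i_r] acts as s_{i_1} ... s_{i_r} *)
Definition wact (X : ctype) (n : nat) (s : seq 'I_n) (lam : weight n) : weight n :=
  foldr (@sref X n) lam s.

(* two words define the same element of W (W acts faithfully on P (x) R) *)
Definition weq (X : ctype) (n : nat) (s t : seq 'I_n) : Prop :=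
  forall lam k, wact X s lam k = wact X t lam k.

Definition reduced (X : ctype) (n : nat) (s : seq 'I_n) : Prop :=
  forall t, weq X s t -> (size s <= size t)%N.

Definition minuscule_word (X : ctype) (n : nat) (lam : weight n) (s : seq 'I_n) : Prop :=
  forall p, (p < size s)%N ->
    forall j0, wact X (drop p.+1 s) lam (nth j0 s p) = 1.

Definition minuscule (X : ctype) (n : nat) (lam : weight n) (s : seq 'I_n) : Prop :=
  exists t, [/\ weq X s t, reduced X t & minuscule_word X lam t].

Definition dominant_minuscule (X : ctype) (n : nat) (s : seq 'I_n) : Prop :=
  exists lam, dominant lam /\ minuscule X lam s.

Definition strong_minuscule (X : ctype) (n : nat) (s : seq 'I_n) : Prop :=
  dominant_minuscule X s /\
  forall lam mu : weight n, dominant lam -> minuscule X lam s ->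
    dominant mu -> minuscule X mu s -> forall k, lam k = mu k.

Definition Lambda_w_is (X : ctype) (n : nat) (s : seq 'I_n) (lam : weight n) : Prop :=
  [/\ strong_minuscule X s, dominant lam & minuscule X lam s].

(* u_p (0-based p, i.e. paper's p+1) for the word s *)
Definition u_count (X : ctype) (n : nat) (s : seq 'I_n) (j0 : 'I_n) (p : nat) : nat :=
  count (adjs X (nth j0 s p)) (drop p.+1 s).

From mathcomp Require Import all_boot all_order all_algebra.
From mathcomp Require Import zify ring.
From Stdlib Require Import Classical FunctionalExtensionality.
Set Implicit Arguments. Unset Strict Implicit. Unset Printing Implicit Defensive.
Import Order.TTheory GRing.Theory Num.Theory.

(* For a reduced word i_1 ... i_r of w, the coroots
   gamma_p = s_{i_r} ... s_{i_(p+1)} alpha_{i_p}^v are exactly the positive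
   coroots that w makes negative, so they depend on w and not on the word.  The
   minuscule condition <Lambda, gamma_p> = 1 therefore passes from the reduced
   word given by the hypothesis to s.  Along s it telescopes to
   <Lambda_i, alpha_j^v> - sum_(a > p) a_(j i_a) = 1 with j = i_p, and since
   a_(j m) lies in {2, 0, -1, -2} this says u_p = 1 - delta_(i j) (mod 2).
   Positivity of gamma_p is the key theorem of Humphreys (Reflection Groups and
   Coxeter Groups, 5.4), proved by induction through rank-two parabolic
   factors; the exchange step uses that lengths of equal elements have equal
   parity, which follows from det s_j = -1. *)

Lemma ex_argmin (A : Type) (P : A -> Prop) (f : A -> nat) :
  (exists a, P a) -> exists a, P a /\ forall b, P b -> (f a <= f b)%N.
Proof.
case=> a Pa; move: {2}(f a) (leqnn (f a)) => N; elim: N a Pa => [|N IH] a Pa leN.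
  by exists a; split=> // b _; move: leN; rewrite leqn0 => /eqP ->.
have [[b [Pb ltba]]|min_a] := classic (exists b, P b /\ (f b < f a)%N).
  by apply: (IH b Pb); rewrite -ltnS (leq_trans ltba).
by exists a; split=> // b Pb; rewrite leqNgt; apply/negP => ltba; apply: min_a; exists b.
Qed.

Lemma discrete_ivt (Q : nat -> Prop) N : Q N -> ~ Q 0%N ->
  exists q, [/\ (q < N)%N, Q q.+1 & ~ Q q].
Proof.
elim: N => [//|N IH] QN notQ0.
have [QN'|notQN] := classic (Q N); last by exists N.
by have [q [ltqN Qq1 notQq]] := IH QN' notQ0; exists q; split; rewrite // ltnS ltnW.
Qed.

Section WeylGroupWords.
Variables (X : ctype) (n : nat).
Local Open Scope ring_scope.
Local Notation word := (seq 'I_n).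
Local Notation C := (cartan X).
Local Notation wact := (@wact X n).
Implicit Types (s t u v x : word) (l mu : weight n).

Lemma cartan_diag (j : 'I_n) : C j j = 2.
Proof. by rewrite /cartan eqxx. Qed.

Lemma srefK (j : 'I_n) : involutive (sref X j).
Proof.
by move=> l; apply: functional_extensionality => k; rewrite /sref cartan_diag; ring.
Qed.

Lemma wact_cat u v l : wact (u ++ v) l = wact u (wact v l).
Proof. exact: foldr_cat. Qed.

Lemma wact_revK u : cancel (wact (rev u)) (wact u).
Proof.
elim: u => [//|j u IH] l.
by rewrite rev_cons -cats1 wact_cat [wact (j :: u) _]/= IH srefK.
Qed.

Lemma wact_Krev u : cancel (wact u) (wact (rev u)).
Proof. by move=> l; rewrite -{2}(revK u) wact_revK. Qed.

Lemma weqP s t : weq X s t <-> wact s =1 wact t.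
Proof.
split=> [st l|st l k]; last by rewrite st.
by apply: functional_extensionality; apply: st.
Qed.

Lemma weq_refl s : weq X s s.
Proof. by []. Qed.

Lemma weq_sym s t : weq X s t -> weq X t s.
Proof. by move=> st l k; rewrite st. Qed.

Lemma weq_trans s t u : weq X s t -> weq X t u -> weq X s u.
Proof. by move=> st tu l k; rewrite st tu. Qed.

Lemma weq_cat s1 s2 t1 t2 : weq X s1 t1 -> weq X s2 t2 -> weq X (s1 ++ s2) (t1 ++ t2).
Proof. by move=> /weqP st1 /weqP st2; apply/weqP => l; rewrite !wact_cat st1 st2. Qed.

Lemma weq_rev s t : weq X s t -> weq X (rev s) (rev t).
Proof. by move/weqP=> st; apply/weqP=> l; rewrite -{1}(wact_revK t l) -st wact_Krev. Qed.

Lemma weq_cons_move (j : 'I_n) s t : weq X (j :: s) t -> weq X s (j :: t).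
Proof. by move/weqP=> st; apply/weqP=> l; rewrite /= -st /= srefK. Qed.

Lemma weq_cons_cons (j : 'I_n) s : weq X (j :: j :: s) s.
Proof. by apply/weqP => l; rewrite /= srefK. Qed.

Lemma reduced_catl u v : reduced X (u ++ v) -> reduced X u.
Proof.
by move=> uv t ut; have := uv (t ++ v) (weq_cat ut (weq_refl v)); rewrite !size_cat leq_add2r.
Qed.

Lemma reduced_catr u v : reduced X (u ++ v) -> reduced X v.
Proof.
by move=> uv t vt; have := uv (u ++ t) (weq_cat (weq_refl u) vt); rewrite !size_cat leq_add2l.
Qed.

Lemma reduced_rev u : reduced X u -> reduced X (rev u).
Proof.
move=> red_u t ut; rewrite size_rev -(size_rev t); apply: red_u.
by rewrite -[u]revK; apply: weq_rev.
Qed.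

Lemma weq_reduced s t : reduced X s -> weq X s t -> (size t <= size s)%N -> reduced X t.
Proof. by move=> red_s st ts t' tt'; apply: leq_trans ts (red_s _ (weq_trans st tt')). Qed.

Lemma reduced_weq_size s t : reduced X s -> reduced X t -> weq X s t -> size s = size t.
Proof. by move=> red_s red_t st; apply/eqP; rewrite eqn_leq red_s // red_t // weq_sym. Qed.

Lemma not_reduced_shorter s : ~ reduced X s -> exists t, weq X s t /\ (size t < size s)%N.
Proof.
move=> nred; apply: NNPP => no_shorter; apply: nred => t st.
by rewrite leqNgt; apply/negP => ts; apply: no_shorter; exists t.
Qed.

Lemma exists_reduced u : exists v, weq X u v /\ reduced X v.
Proof.
have [v [uv min_v]] := ex_argmin size (ex_intro (weq X u) u (weq_refl u)).
by exists v; split=> // t vt; apply: min_v; apply: weq_trans vt.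
Qed.

Lemma not_reduced_cons_cons (j : 'I_n) s : ~ reduced X (j :: j :: s).
Proof. by move/(_ s (weq_cons_cons j s)); rewrite /= ltnNge leqnSn. Qed.

(** * Matrices of words and parity of length *)

Lemma sum_fund (k : 'I_n) (f : 'I_n -> int) : \sum_m fund m k * f m = f k.
Proof.
rewrite (bigD1 k) //= big1 ?addr0 => [|m /negPf mk]; first by rewrite /fund eqxx mul1r.
by rewrite /fund eq_sym mk mul0r.
Qed.

Lemma wact_linear u l (k : 'I_n) : wact u l k = \sum_m l m * wact u (fund m) k.
Proof.
elim: u k => [|j u IH] k; first by rewrite /= -(sum_fund k l); apply: eq_bigr => m _; rewrite mulrC.
rewrite [LHS]/= /sref IH (IH j) big_distrl -sumrB.
by apply: eq_bigr => m _; rewrite [wact (j :: u) _ _]/= /sref mulrBr mulrA.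
Qed.

Definition word_mx u : 'M[int]_n := \matrix_(k, m) wact u (fund m) k.

Definition sref_mx (j : 'I_n) : 'M[int]_n := \matrix_(k, m) sref X j (fund m) k.

Lemma word_mx_cons (j : 'I_n) u : word_mx (j :: u) = sref_mx j *m word_mx u.
Proof.
apply/matrixP => k m; rewrite !mxE.
under eq_bigr => i _ do rewrite !mxE /sref mulrBl.
rewrite sumrB sum_fund [LHS]/= /sref; congr (_ - _).
rewrite (bigD1 j) //= big1 ?addr0 => [|i /negPf ij]; first by rewrite /fund eqxx mul1r mulrC.
by rewrite /fund eq_sym ij !mul0r.
Qed.

Lemma det_sref_mx (j : 'I_n) : \det (sref_mx j) = -1.
Proof.
have minor1 : row' j (col' j (sref_mx j)) = 1%:M.
  apply/matrixP => a b; rewrite !mxE /sref /fund (inj_eq lift_inj).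
  by rewrite (negPf (neq_lift j b)) mul0r subr0; case: eqP.
rewrite (expand_det_row _ j) (bigD1 j) //= big1 ?addr0 => [|m mj]; last first.
  by rewrite mxE /sref /fund eq_sym (negPf mj) mul0r subr0 mul0r.
rewrite mxE /sref cartan_diag /fund eqxx /cofactor minor1 det1 addnn -signr_odd odd_double.
by rewrite expr0; ring.
Qed.

Lemma det_word_mx u : \det (word_mx u) = (-1) ^+ size u.
Proof.
elim: u => [|j u IH]; last by rewrite word_mx_cons det_mulmx det_sref_mx IH exprS.
suff -> : word_mx [::] = 1%:M by rewrite det1.
by apply/matrixP => k m; rewrite !mxE /= /fund; case: eqP.
Qed.

Lemma weq_odd_size s t : weq X s t -> odd (size s) = odd (size t).
Proof.
move=> st; have : word_mx s = word_mx t by apply/matrixP => k m; rewrite !mxE st.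
move/(congr1 determinant); rewrite !det_word_mx -signr_odd -[RHS]signr_odd.
by do 2!case: odd; rewrite ?expr1 ?expr0 // => /eqP.
Qed.

Lemma not_reduced_cons (j : 'I_n) v : reduced X v -> ~ reduced X (j :: v) ->
  exists t, weq X v (j :: t) /\ reduced X (j :: t).
Proof.
move=> red_v /not_reduced_shorter [t [jvt ltt]].
have neq_tv : size t != size v.
  by apply/eqP => eq_tv; move: (weq_odd_size jvt); rewrite /= eq_tv; case: odd.
have v_jt := weq_cons_move jvt.
exists t; split=> //; apply: weq_reduced red_v v_jt _.
by rewrite ltn_neqAle neq_tv -ltnS.
Qed.

(** * Rank two *)

Lemma cartan_rank2 (j k : 'I_n) : j != k ->
  [\/ C j k = 0 /\ C k j = 0, C j k = -1 /\ C k j = -1,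
      C j k = -1 /\ C k j = -2 | C j k = -2 /\ C k j = -1].
Proof.
rewrite /cartan -(inj_eq val_inj) /=; move: (val j) (val k) => a b neq_ab.
by case: X; repeat case: ifP; intros;
  solve [exact: Or41 | exact: Or42 | exact: Or43 | exact: Or44 | exfalso; lia].
Qed.

Fixpoint alternating (a b : 'I_n) (k : nat) : word :=
  if k is k'.+1 then a :: alternating b a k' else [::].

Lemma size_alternating (a b : 'I_n) k : size (alternating a b k) = k.
Proof. by elim: k a b => //= k IH a b; rewrite IH. Qed.

Lemma take_alternating (a b : 'I_n) m k :
  (m <= k)%N -> take m (alternating a b k) = alternating a b m.
Proof. by elim: m a b k => [|m IH] a b [|k] //= le_mk; rewrite IH. Qed.

(* m is the order of s_a s_b, i.e. 2, 3 or 4. *)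
Lemma dihedral_braid (a b : 'I_n) : a != b ->
  exists m, [/\ (0 < m)%N, weq X (alternating b a m) (alternating a b m) &
    forall k mu, (k < m)%N -> 0 <= mu a -> 0 <= mu b ->
      0 <= wact (alternating b a k) mu a].
Proof.
move=> neq_ab; have [] := cartan_rank2 neq_ab => -[Cab Cba];
  [exists 2%N | exists 3%N | exists 4%N | exists 4%N]; split=> //;
  try by move=> l k /=; rewrite /sref /= ?cartan_diag Cab Cba; ring.
all: move=> k mu lt_km mu_a mu_b; do 4?[case: k lt_km => [|k] lt_km] => //=;
  rewrite /sref /= ?cartan_diag ?Cab ?Cba; lia.
Qed.

Lemma braid_not_reduced (a b : 'I_n) m : (0 < m)%N ->
  weq X (alternating b a m) (alternating a b m) -> ~ reduced X (a :: alternating b a m).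
Proof.
case: m => // m _ braid /(_ (alternating b a m)) red.
have := red (weq_trans (weq_cat (weq_refl [:: a]) braid) (weq_cons_cons a _)).
by rewrite /= !size_alternating ltnNge leqnSn.
Qed.

Lemma reduced_pair_alternating (a b : 'I_n) x : a != b -> all (pred2 a b) x ->
  reduced X (b :: x) -> x = alternating a b (size x).
Proof.
elim: x a b => [//|z x IH] a b neq_ab /= /andP[z_ab x_ab] red_bzx.
have z_a : z = a.
  by case/pred2P: z_ab => // z_b; rewrite z_b in red_bzx; case: (not_reduced_cons_cons red_bzx).
rewrite z_a in red_bzx *; congr (_ :: _); apply: IH.
- by rewrite eq_sym.
- by apply: sub_all x_ab => y; rewrite /= orbC.
- exact: (@reduced_catr [:: b]).
Qed.

Lemma dihedral_coroot_ge0 (a b : 'I_n) x mu : a != b -> all (pred2 a b) x ->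
  reduced X (a :: x) -> 0 <= mu a -> 0 <= mu b -> 0 <= wact x mu a.
Proof.
move=> neq_ab x_ab red_ax mu_a mu_b.
have x_ba : all (pred2 b a) x by apply: sub_all x_ab => y; rewrite /= orbC.
have x_alt : x = alternating b a (size x).
  by apply: reduced_pair_alternating x_ba red_ax; rewrite eq_sym.
move: red_ax; rewrite x_alt; move: (size x) => k red_ax.
have [m [m_gt0 braid pos]] := dihedral_braid neq_ab.
apply: pos => //; rewrite ltnNge; apply/negP => le_mk.
apply: (braid_not_reduced m_gt0 braid); rewrite -(take_alternating b a le_mk).
by apply: (@reduced_catl _ (drop m (alternating b a k))); rewrite /= cat_take_drop.
Qed.

(** * Positivity of inversion coroots *)

(* u = x v with x in the parabolic subgroup <s_a, s_b> and lengths adding up;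
   a shortest such v drives the induction in Humphreys' proof. *)
Definition pair_factor (a b : 'I_n) u v :=
  exists x, [/\ all (pred2 a b) x, weq X (x ++ v) u & (size x + size v = size u)%N].

Lemma minimal_pair_factor_reduced (a b j : 'I_n) u v :
  reduced X u -> pair_factor a b u v ->
  (forall v', pair_factor a b u v' -> size v <= size v')%N ->
  pred2 a b j -> reduced X (j :: v).
Proof.
move=> red_u [x [x_ab xv_u size_xv]] min_v j_ab.
have red_v : reduced X v.
  apply: (@reduced_catr x); apply: weq_reduced red_u (weq_sym xv_u) _.
  by rewrite size_cat size_xv.
apply: NNPP => /(not_reduced_cons red_v) [t [v_jt red_jt]].
have size_jt := reduced_weq_size red_v red_jt v_jt.
suff /min_v : pair_factor a b u t by rewrite size_jt ltnn.
exists (rcons x j); split.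
- by rewrite all_rcons j_ab x_ab.
- by rewrite -cats1 -catA; apply: weq_trans (weq_cat (weq_refl x) (weq_sym v_jt)) xv_u.
- by rewrite size_rcons -size_xv size_jt addSnnS.
Qed.

(* [wact v l m] is <l, v^-1 alpha_m^v>, so this says that v^-1 alpha_m^v is a
   positive coroot. *)
Definition positive_coroot v (m : 'I_n) := forall l, dominant l -> 0 <= wact v l m.

Definition negative_coroot v (m : 'I_n) := forall l, dominant l -> wact v l m <= 0.

Lemma reduced_cons_positive_coroot (a : 'I_n) u :
  reduced X (a :: u) -> positive_coroot u a.
Proof.
move: {2}(size u) (leqnn (size u)) => N; elim: N a u => [|N IH] a [|b u] //=;
  do ?by move=> _ _ l; apply.
move=> le_uN red_abu.
have neq_ab : a != b.
  by apply: contraPneq red_abu => <-; apply: not_reduced_cons_cons.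
have red_bu := @reduced_catr [:: a] _ red_abu.
have bu_factor : pair_factor a b (b :: u) u by exists [:: b]; rewrite /= eqxx orbT.
have [v [[x [x_ab xv_bu size_xv]] min_v]] := ex_argmin size (ex_intro _ u bu_factor).
have v_factor : pair_factor a b (b :: u) v by exists x.
have le_vN : (size v <= N)%N by rewrite (leq_trans (min_v u bu_factor)).
have red_jv j : pred2 a b j -> reduced X (j :: v).
  exact: minimal_pair_factor_reduced red_bu v_factor min_v.
have red_ax : reduced X (a :: x).
  apply: (@reduced_catl _ v); apply: weq_reduced red_abu _ _.
    exact: weq_cat (weq_refl [:: a]) (weq_sym xv_bu).
  by rewrite /= size_cat size_xv.
move=> l dom_l; move/weqP: xv_bu => <-; rewrite wact_cat.
by apply: dihedral_coroot_ge0 neq_ab x_ab red_ax _ _; apply: IH (red_jv _ _) l dom_l;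
  rewrite //= eqxx ?orbT.
Qed.

Lemma fund_dominant (k : 'I_n) : dominant (fund k).
Proof. by move=> j; rewrite /fund; case: eqP. Qed.

Lemma sref_fund (j k : 'I_n) : k != j -> sref X j (fund k) = fund k.
Proof.
move=> neq_kj; apply: functional_extensionality => m.
by rewrite /sref /fund [j == k]eq_sym (negPf neq_kj) mul0r subr0.
Qed.

Lemma coroot_not_pos_neg v (m : 'I_n) : ~ (positive_coroot v m /\ negative_coroot v m).
Proof.
case=> pos neg; have zero k : wact v (fund k) m = 0.
  by apply/eqP; rewrite eq_le (neg _ (fund_dominant k)) (pos _ (fund_dominant k)).
have := wact_linear v (wact (rev v) (fund m)) m.
by rewrite wact_revK big1 => [|k _]; rewrite ?zero ?mulr0 // /fund eqxx.
Qed.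

Lemma coroot_pos_or_neg v (m : 'I_n) : positive_coroot v m \/ negative_coroot v m.
Proof.
have [v' [/weqP vv' red_v']] := exists_reduced v.
have [red_mv'|/(not_reduced_cons red_v') [t [/weqP v't red_mt]]] := classic (reduced X (m :: v')).
  by left=> l dom_l; rewrite vv'; apply: reduced_cons_positive_coroot.
right=> l dom_l; rewrite vv' v't [wact (m :: t) _ _]/= /sref cartan_diag.
by have := reduced_cons_positive_coroot red_mt dom_l; lia.
Qed.

Lemma coroot_sign_change_simple v (m j : 'I_n) : positive_coroot v m ->
  negative_coroot (v ++ [:: j]) m -> forall l, wact v l m = l j.
Proof.
move=> pos neg; have zero k : k != j -> wact v (fund k) m = 0.
  move=> neq_kj; apply/eqP; rewrite eq_le (pos _ (fund_dominant k)) andbT.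
  by have := neg _ (fund_dominant k); rewrite wact_cat /= sref_fund.
have scale l : wact v l m = l j * wact v (fund j) m.
  by rewrite wact_linear (bigD1 j) //= big1 ?addr0 // => k /zero ->; rewrite mulr0.
have a_ge0 := pos _ (fund_dominant j).
have := scale (wact (rev v) (fund m)); rewrite wact_revK {1}/fund eqxx.
move: (wact v (fund j) m) (wact (rev v) (fund m) j) scale a_ge0 => a b scale a_ge0 ab1.
have b_gt0 : 0 < b by nia.
have a1 : a = 1 by nia.
by move=> l; rewrite scale a1 mulr1.
Qed.

Lemma negative_coroot_drop_rev s (j0 : 'I_n) p : reduced X s -> (p < size s)%N ->
  negative_coroot (drop p.+1 s ++ rev s) (nth j0 s p).
Proof.
move=> red_s lt_ps l dom_l; set j := nth j0 s p.
have red_jt : reduced X (j :: rev (take p s)).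
  rewrite -rev_rcons -(take_nth j0 lt_ps); apply: reduced_rev.
  by apply: (@reduced_catl _ (drop p.+1 s)); rewrite cat_take_drop.
have -> : rev s = rev (drop p.+1 s) ++ rev (take p.+1 s) by rewrite -rev_cat cat_take_drop.
rewrite !wact_cat wact_revK (take_nth j0 lt_ps) rev_rcons [wact (j :: _) _ _]/= /sref cartan_diag.
by have := reduced_cons_positive_coroot red_jt dom_l; lia.
Qed.

Lemma inversion_coroot_weq s t (j0 : 'I_n) p :
  reduced X s -> reduced X t -> weq X s t -> (p < size s)%N ->
  exists2 q, (q < size t)%N &
    forall l, wact (drop p.+1 s) l (nth j0 s p) = wact (drop q.+1 t) l (nth j0 t q).
Proof.
move=> red_s red_t st lt_ps; set j := nth j0 s p.
(* [g q] transports gamma_p by the suffixes of t, from gamma_p itself (q = size t,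
   positive) to w gamma_p (q = 0, negative); where its sign changes it is simple. *)
pose g q := drop p.+1 s ++ rev (drop q t).
have pos_top : positive_coroot (g (size t)) j.
  rewrite /g drop_size cats0; apply: reduced_cons_positive_coroot.
  by rewrite /j -(drop_nth j0) //; apply: (@reduced_catr (take p s)); rewrite cat_take_drop.
have not_pos0 : ~ positive_coroot (g 0%N) j.
  move=> pos0; apply: (@coroot_not_pos_neg (g 0%N) j); split=> // l dom_l.
  have /weqP rev_ts : weq X (rev t) (rev s) by apply/weq_rev/weq_sym.
  by rewrite /g drop0 wact_cat rev_ts -wact_cat; apply: negative_coroot_drop_rev.
have [q [lt_qt pos_q1 not_pos_q]] :=
  @discrete_ivt (fun q => positive_coroot (g q) j) _ pos_top not_pos0.
exists q => // l; have neg_q : negative_coroot (g q.+1 ++ [:: nth j0 t q]) j.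
  have [//|] := coroot_pos_or_neg (g q) j.
  by rewrite /g (drop_nth j0 lt_qt) rev_cons -cats1 catA.
have := coroot_sign_change_simple pos_q1 neg_q (wact (drop q.+1 t) l).
by rewrite /g wact_cat wact_Krev.
Qed.

(** * Minuscule words *)

Lemma minuscule_word_weq l s t : reduced X s -> reduced X t -> weq X s t ->
  minuscule_word X l t -> minuscule_word X l s.
Proof.
move=> red_s red_t st min_t p lt_ps j0.
by have [q lt_qt ->] := inversion_coroot_weq j0 red_s red_t st lt_ps; apply: min_t.
Qed.

Lemma minuscule_word_drop l u k : minuscule_word X l u -> minuscule_word X l (drop k u).
Proof.
move=> min_u p; rewrite size_drop => lt_p j0.
by rewrite drop_drop nth_drop addSn addnC; apply: min_u; rewrite -ltn_subRL.
Qed.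

Lemma minuscule_word_wact l u (k : 'I_n) :
  minuscule_word X l u -> wact u l k = l k - \sum_(x <- u) C k x.
Proof.
elim: u => [|x u IH] min_xu; first by rewrite big_nil subr0.
have min_u : minuscule_word X l u by have := minuscule_word_drop (k := 1) min_xu; rewrite drop1.
have := min_xu 0%N isT x; rewrite /= drop0 => wact_x.
by rewrite /sref IH // wact_x big_cons; ring.
Qed.

Lemma sum_cartan_count (j : 'I_n) r : \sum_(x <- r) C j x =
  2 * (count (pred1 j) r)%:Z - (count (adjs X j) r)%:Z
    - 2 * (count (fun m => C j m == -2) r)%:Z.
Proof.
elim: r => [|x r IH]; first by rewrite big_nil.
have C_jx : C j x = 2 * (x == j)%:Z - (adjs X j x)%:Z - 2 * (C j x == -2)%:Z.
  have [->|neq_xj] := eqVneq x j; first by rewrite /adjs cartan_diag.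
  rewrite /adjs; rewrite eq_sym in neq_xj.
  by have [] := cartan_rank2 neq_xj => -[-> _].
by rewrite big_cons IH {1}C_jx /= !PoszD; ring.
Qed.

Lemma u_count_minuscule l s (j0 : 'I_n) p : minuscule_word X l s -> (p < size s)%N ->
  exists c c' : nat, (u_count X s j0 p + 2 * c)%:Z = 1 - l (nth j0 s p) + (2 * c')%:Z.
Proof.
move=> min_s lt_ps; have := min_s p lt_ps j0.
rewrite (minuscule_word_wact _ (minuscule_word_drop (k := p.+1) min_s)) sum_cartan_count.
by exists (count (fun m => C (nth j0 s p) m == -2) (drop p.+1 s)),
  (count (pred1 (nth j0 s p)) (drop p.+1 s)); rewrite /u_count; lia.
Qed.

End WeylGroupWords.

Theorem lemma6p5 (X : ctype) (n : nat) (i : 'I_n) (s : seq 'I_n) :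
  valid_rank X n -> inK X i ->
  Lambda_w_is X s (fund i) -> reduced X s ->
  forall p : nat, (p < (size s).-1)%N ->
    if nth i s p == i then ~~ odd (u_count X s i p)
    else (0 < u_count X s i p)%N && odd (u_count X s i p).
Proof.
move=> _ _ [_ _ [t [st red_t min_t]]] red_s p lt_p.
have lt_ps : (p < size s)%N := leq_trans lt_p (leq_pred _).
have min_s := minuscule_word_weq red_s red_t st min_t.
have [c [c']] := u_count_minuscule i min_s lt_ps.
rewrite /fund; case: eqP => _ count_eq.
- have /(congr1 odd) : (u_count X s i p + 2 * c = 2 * c')%N by lia.
  by rewrite oddD !oddM /= addbF => ->.
- have /(congr1 odd) : (u_count X s i p + 2 * c = (2 * c').+1)%N by lia.
  by rewrite oddD /= !oddM /= addbF => odd_u; rewrite odd_u odd_gt0.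
Qed.
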